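(* Let $X$ be a normed space, $U\subseteq X$ open nonempty, $Y$ a Banach space and $k\in\overline{\mathbb{N}}$. Let $\mathcal{W}\subseteq\overline{\mathbb{R}}^U$ be such that for each compact $K\subseteq U$ there exists $f_K\in\mathcal{W}$ with $\inf_{x\in K}|f_K(x)|>0$. Then $C^k_{\mathcal{W}}(U,Y)$ is complete.
   Context: $C^k_{\mathcal W}(U,Y)$: $k$ times continuously Fréchet differentiable $\gamma:U\to Y$ with $\|\gamma\|_{f,j}:=\sup_{x\in U}|f(x)|\,\|D^{(j)}\gamma(x)\|_{op}<\infty$ for all $f\in\mathcal W$, $j\in\mathbb N$, $j\le k$ ($\infty\cdot0=0$), with the locally convex topology generated by these seminorms. $\overline{\mathbb{R}}=\mathbb{R}\cup\{\pm\infty\}$, $\overline{\mathbb N}=\mathbb N\cup\{\infty\}$. *)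

From HB Require Import structures.
From mathcomp Require Import all_boot all_order all_algebra.
From mathcomp Require Import all_classical all_reals all_analysis.
From Stdlib Require Import ClassicalEpsilon.
Set Implicit Arguments. Unset Strict Implicit. Unset Printing Implicit Defensive.
Import Order.TTheory GRing.Theory Num.Theory.
Import numFieldNormedType.Exports.
Local Open Scope classical_set_scope.
Local Open Scope ring_scope.

(* Extended naturals \bar N = N u {oo}: None stands for oo. *)
Definition extnat := option nat.
Definition le_extnat (j : nat) (k : extnat) : Prop :=
  match k with None => True | Some n => (j <= n)%N end.

Section Defs.
Context {R : realType} {X : normedModType R} {Y : normedModType R}.

(* A j-linear map X^j -> Y is represented as A : (nat -> X) -> Y, reading
   only the arguments h 0, ..., h (j-1). *)

Definition opnorm (j : nat) (A : (nat -> X) -> Y) : \bar R :=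
  ereal_sup [set (`|A h|)%:E | h in [set h : nat -> X | forall i, (i < j)%N -> `|h i| <= 1]].

Definition upd (h : nat -> X) (i : nat) (w : X) : nat -> X :=
  fun l => if l == i then w else h l.

Definition consv (v : X) (h : nat -> X) : nat -> X :=
  fun i => if i is i'.+1 then h i' else v.

Definition bounded_multilinear (j : nat) (A : (nat -> X) -> Y) : Prop :=
  [/\ (forall h h', (forall i, (i < j)%N -> h i = h' i) -> A h = A h'),
      (forall i, (i < j)%N -> forall (h : nat -> X) (a : R) (u v : X),
          A (upd h i (a *: u + v)) = a *: A (upd h i u) + A (upd h i v))
    & (opnorm j A < +oo)%E].

(* D is the family of higher Frechet derivatives of gamma on U up to order k:
   D j x = D^(j) gamma (x), with
   D^(j+1) gamma(x)[v, h_1..h_j] = (D (D^(j) gamma)(x) v)[h_1..h_j]. *)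
Definition is_higher_derivs (U : set X) (k : extnat) (g : X -> Y)
    (D : nat -> X -> (nat -> X) -> Y) : Prop :=
  [/\ (forall x h, U x -> D 0%N x h = g x),
      (forall j x, le_extnat j k -> U x -> bounded_multilinear j (D j x)),
      (forall j x, le_extnat j.+1 k -> U x ->
         forall e : R, 0 < e -> exists2 d : R, 0 < d &
           forall y, U y -> `|y - x| < d ->
             (opnorm j (fun h => (D j y h - D j x h - D j.+1 x (consv (y - x) h))%R)
                <= (e * `|y - x|)%:E)%E)
    &
      (forall j x, le_extnat j k -> U x ->
         forall e : R, 0 < e -> exists2 d : R, 0 < d &
           forall y, U y -> `|y - x| < d ->
             (opnorm j (fun h => (D j y h - D j x h)%R) <= e%:E)%E)].

Definition isCk (U : set X) (k : extnat) (g : X -> Y) : Prop :=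
  exists D, is_higher_derivs U k g D.

(* the (unique on U, since U is open) family of higher derivatives *)
Definition hder (U : set X) (k : extnat) (g : X -> Y) : nat -> X -> (nat -> X) -> Y :=
  epsilon (inhabits (fun _ _ _ => 0)) (is_higher_derivs U k g).

(* ||g||_{f,j} = sup_{x in U} |f x| * ||D^(j) g(x)||_op   (with oo * 0 = 0) *)
Definition wseminorm (U : set X) (k : extnat) (f : X -> \bar R) (j : nat)
    (g : X -> Y) : \bar R :=
  ereal_sup [set (`|f x| * opnorm j (hder U k g j x))%E | x in U].

Definition CkW (U : set X) (k : extnat) (W : set (X -> \bar R)) : set (X -> Y) :=
  [set g | isCk U k g /\
     forall f j, W f -> le_extnat j k -> (wseminorm U k f j g < +oo)%E].

(* Completeness of C^k_W(U,Y) for the locally convex topology generated by the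
   seminorms: every proper Cauchy filter on C^k_W(U,Y) converges in C^k_W(U,Y). *)
Definition CkW_complete (U : set X) (k : extnat) (W : set (X -> \bar R)) : Prop :=
  forall F : set_system (X -> Y), ProperFilter F -> F (CkW U k W) ->
    (forall f j (e : R), W f -> le_extnat j k -> 0 < e ->
       exists2 A, F A & forall g g', A g -> A g' ->
         (wseminorm U k f j (fun x => (g x - g' x)%R) < e%:E)%E) ->
    exists2 g, CkW U k W g &
      forall f j (e : R), W f -> le_extnat j k -> 0 < e ->
        F [set g' | (wseminorm U k f j (fun x => (g' x - g x)%R) < e%:E)%E].

End Defs.

From HB Require Import structures.
From mathcomp Require Import all_boot all_order all_algebra.
From mathcomp Require Import all_classical all_reals all_analysis.
From Stdlib Require Import ClassicalEpsilon.
From mathcomp Require Import ring lra.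
Import Order.TTheory GRing.Theory Num.Theory.
Import numFieldNormedType.Exports.
Local Open Scope classical_set_scope.
Local Open Scope ring_scope.
Set Implicit Arguments. Unset Strict Implicit. Unset Printing Implicit Defensive.

(* Since every compact subset of U carries a weight bounded away from 0, each
   seminorm of the family controls the derivatives uniformly on that compact set.
   Along a Cauchy filter the derivatives D^(j) g(x)[h] therefore converge, to limits
   D_j(x)[h] that are again bounded j-linear and are attained uniformly on compact
   sets. Continuity of D_j at x follows by testing on the compact set {x} u {y_n}
   for a sequence y_n -> x, and D_(j+1) is the derivative of D_j by the mean value
   inequality along the (compact) segment [x, y], applied to an element of the filter
   that approximates both D_j and D_(j+1) on that segment. So D is the family of
   derivatives of its 0-th member, and passing to the limit in the Cauchy condition
   shows that the limit lies in C^k_W and that the filter converges to it. *)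

Lemma subrACA (V : zmodType) (a b c d : V) : a - b - (c - d) = a - c - (b - d).
Proof. by rewrite !opprD addrACA. Qed.

Lemma subr_telescope (V : zmodType) (a b c d : V) : c - d = (a - b) - (a - c) + (b - d).
Proof. by rewrite subrACA subrr sub0r opprB addrA subrK. Qed.

Lemma le_extnatS j k : le_extnat j.+1 k -> le_extnat j k.
Proof. by case: k => //= n /ltnW. Qed.

Section Multilinear.
Variables (R : realType) (X Y : normedModType R).
Implicit Types (A B : (nat -> X) -> Y) (h : nat -> X).

Definition in_unit_ball (j : nat) h := forall i, (i < j)%N -> `|h i| <= 1.

Lemma opnorm_ubound j A h : in_unit_ball j h -> (`|A h|%:E <= opnorm j A)%E.
Proof. by move=> hj; apply: ereal_sup_ubound; exists h. Qed.

Lemma opnorm_le j A (c : \bar R) :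
  (forall h, in_unit_ball j h -> (`|A h|%:E <= c)%E) -> (opnorm j A <= c)%E.
Proof. by move=> Ac; apply/ereal_supP => _ [h hj <-]; exact: Ac. Qed.

Lemma opnorm_ge0 j A : (0 <= opnorm j A)%E.
Proof.
by apply: le_trans (@opnorm_ubound j A (fun _ => 0) _) => // i _; rewrite normr0.
Qed.

Lemma opnorm_fin_num j A : (opnorm j A < +oo)%E -> opnorm j A \is a fin_num.
Proof. by move=> Afin; rewrite ge0_fin_numE // opnorm_ge0. Qed.

Lemma normr_le_opnorm j A h : (opnorm j A < +oo)%E -> in_unit_ball j h ->
  `|A h| <= fine (opnorm j A).
Proof.
by move=> Afin hj; rewrite -lee_fin fineK ?opnorm_fin_num //; exact: opnorm_ubound.
Qed.

Lemma opnormB_le j A B :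
  (opnorm j (fun h => (A h - B h)%R) <= opnorm j A + opnorm j B)%E.
Proof.
apply: opnorm_le => h hj; apply: le_trans (_ : (`|A h| + `|B h|)%:E <= _)%E.
  by rewrite lee_fin ler_normB.
by rewrite EFinD leeD // opnorm_ubound.
Qed.

(* The weight [a] may be [+oo]; recall [+oo * 0 = 0]. *)
Lemma mule_opnorm_le j A (a b : \bar R) : (0 <= a)%E ->
  (forall h, in_unit_ball j h -> (a * `|A h|%:E <= b)%E) -> (a * opnorm j A <= b)%E.
Proof.
move=> a0 Ab.
have b0 : (0 <= b)%E.
  apply: le_trans (Ab (fun _ => 0) _); first exact: mule_ge0.
  by move=> i _; rewrite normr0.
case: b b0 Ab => [b b0 Ab|_ _|//]; last by rewrite leey.
case: a a0 Ab => [a a0 Ab|_ Ab|//].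
- rewrite lee_fin in a0; have [->|an0] := eqVneq a 0; first by rewrite mul0e.
  have a_gt0 : 0 < a by rewrite lt_neqAle eq_sym an0.
  have : (opnorm j A <= (a^-1 * b)%:E)%E.
    apply: opnorm_le => h hj; rewrite lee_fin ler_pdivlMl // -lee_fin EFinM.
    exact: Ab.
  move/(@lee_wpmul2l _ a%:E); rewrite lee_fin => /(_ a0) /le_trans; apply.
  by rewrite -EFinM mulrA divff ?mul1r.
- suff -> : opnorm j A = 0%E by rewrite mule0.
  apply/eqP; rewrite eq_le opnorm_ge0 andbT; apply: opnorm_le => h hj.
  rewrite lee_fin leNgt; apply/negP => Ah.
  by have := Ab h hj; rewrite gt0_mulye ?lte_fin // leye_eq.
Qed.

Lemma upd_id h i : upd h i (h i) = h.
Proof. by apply/funext => l; rewrite /upd; case: eqP => // ->. Qed.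

Lemma upd_neq h i u l : l != i -> upd h i u l = h l.
Proof. by rewrite /upd => /negbTE ->. Qed.

Lemma upd_eq h i u : upd h i u i = u.
Proof. by rewrite /upd eqxx. Qed.

Lemma upd0_consv v h w : upd (consv v h) 0 w = consv w h.
Proof. by apply/funext => -[|l]. Qed.

Lemma consv_head_behead h : consv (h 0%N) (fun i => h i.+1) = h.
Proof. by apply/funext => -[]. Qed.

Lemma in_unit_ball_consv j v h :
  `|v| <= 1 -> in_unit_ball j h -> in_unit_ball j.+1 (consv v h).
Proof. by move=> v1 hj [|i] //= ij; apply: hj. Qed.

Section BoundedMultilinear.
Variables (j : nat) (A : (nat -> X) -> Y).
Hypothesis Aml : bounded_multilinear j A.

Lemma multilinear_upd0 h i : (i < j)%N -> A (upd h i 0) = 0.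
Proof.
case: Aml => _ Alin _ ij; have := Alin i ij h 1 0 0; rewrite !scale1r addr0.
by move=> E; apply/(@addrI _ (A (upd h i 0))); rewrite addr0 -E.
Qed.

Lemma multilinear_updZ h i a u : (i < j)%N ->
  A (upd h i (a *: u)) = a *: A (upd h i u).
Proof.
move=> ij; have [_ Alin _] := Aml; have := Alin i ij h a u 0.
by rewrite !addr0 multilinear_upd0 // addr0.
Qed.

Lemma normr_multilinear_le h : `|A h| <= fine (opnorm j A) * \prod_(i < j) `|h i|.
Proof.
have [_ _ Afin] := Aml.
(* Rescale the coordinates h_(m-1), ..., h_0 into the unit ball one at a time. *)
suff Am m : (m <= j)%N -> forall h, (forall i, (m <= i < j)%N -> `|h i| <= 1) ->
    `|A h| <= fine (opnorm j A) * \prod_(i < m) `|h i|.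
  by apply: Am => // i /andP[ji ij]; rewrite ltnNge ji in ij.
elim: m => [_ h' h'1|m IHm mj h' h'1].
  by rewrite big_ord0 mulr1; apply: normr_le_opnorm => // i ij; exact: h'1.
have [h'm0|h'mn0] := eqVneq (h' m) 0.
  rewrite -(upd_id h' m) h'm0 multilinear_upd0 // normr0.
  by apply: mulr_ge0; [exact/fine_ge0/opnorm_ge0|apply: prodr_ge0].
set a := `|h' m|; have a_gt0 : 0 < a by rewrite normr_gt0.
set u := h' m; set h'' := upd h' m (a^-1 *: u).
have -> : A h' = a *: A h''.
  by rewrite /h'' -multilinear_updZ // scalerA divff ?gt_eqF // scale1r upd_id.
rewrite normrZ (ger0_norm (ltW a_gt0)) big_ord_recr /= [_ * a]mulrC mulrCA.
rewrite ler_wpM2l ?(ltW a_gt0) //.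
have -> : \prod_(i < m) `|h' (widen_ord (leqnSn m) i)| = \prod_(i < m) `|h'' i|.
  by apply: eq_bigr => i _; rewrite /h'' upd_neq //= neq_ltn ltn_ord.
apply: IHm; first exact: ltnW.
move=> i /andP[mi ij]; have [->|ne] := eqVneq i m.
  by rewrite /h'' upd_eq normrZ normrV ?unitfE ?gt_eqF // normr_id mulVf ?gt_eqF.
by rewrite /h'' upd_neq //; apply: h'1; rewrite ij andbT ltn_neqAle eq_sym ne.
Qed.

Lemma multilinear_eq0 : (forall h, in_unit_ball j h -> A h = 0) -> forall h, A h = 0.
Proof.
move=> A0 h; apply/normr0_eq0/eqP; rewrite eq_le normr_ge0 andbT.
apply: le_trans (normr_multilinear_le h) _.
suff -> : opnorm j A = 0%E by rewrite mul0r.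
apply/eqP; rewrite eq_le opnorm_ge0 andbT.
by apply: opnorm_le => h' /A0 ->; rewrite normr0.
Qed.

End BoundedMultilinear.

Lemma multilinearB j A B : bounded_multilinear j A -> bounded_multilinear j B ->
  bounded_multilinear j (fun h => A h - B h).
Proof.
move=> [Aeq Alin Afin] [Beq Blin Bfin]; split.
- by move=> h h' hh'; rewrite (Aeq h h') // (Beq h h').
- by move=> i ij h a u v; rewrite Alin // Blin // scalerBr opprD addrACA.
- apply: le_lt_trans (opnormB_le _ _ _) _.
  by rewrite -(fineK (opnorm_fin_num Afin)) -(fineK (opnorm_fin_num Bfin)) ltry.
Qed.

Section ConsMultilinear.
Variables (j : nat) (A : (nat -> X) -> Y).
Hypothesis Aml : bounded_multilinear j.+1 A.

Lemma multilinear_consv0 h : A (consv 0 h) = 0.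
Proof. by rewrite -(upd0_consv 0 h 0) (multilinear_upd0 Aml). Qed.

Lemma multilinear_consvZ a v h : A (consv (a *: v) h) = a *: A (consv v h).
Proof. by rewrite -(upd0_consv v h (a *: v)) (multilinear_updZ Aml) // upd0_consv. Qed.

Lemma normr_multilinear_consv_le (c : R) v h :
  (forall h', in_unit_ball j.+1 h' -> `|A h'| <= c) -> in_unit_ball j h ->
  `|A (consv v h)| <= c * `|v|.
Proof.
move=> Ac hj; have [->|vn0] := eqVneq v 0.
  by rewrite multilinear_consv0 !normr0 mulr0.
have v_gt0 : 0 < `|v| by rewrite normr_gt0.
rewrite -[v in consv v](scale1r v) -(@divff _ `|v|) ?gt_eqF // -scalerA.
rewrite multilinear_consvZ normrZ normr_id mulrC ler_wpM2r ?(ltW v_gt0) //.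
apply/Ac/in_unit_ball_consv => //.
by rewrite normrZ normrV ?unitfE ?gt_eqF // normr_id mulVf ?gt_eqF.
Qed.

(* This is what makes Frechet derivatives unique. *)
Lemma multilinear_consv_littleo_eq0 :
  (forall e : R, 0 < e -> exists2 d : R, 0 < d & forall v h, `|v| < d ->
     in_unit_ball j h -> `|A (consv v h)| <= e * `|v|) ->
  forall h, A h = 0.
Proof.
move=> Ao; apply: (multilinear_eq0 Aml) => h hj.
rewrite -[h]consv_head_behead; set v := h 0%N; set h' := fun i => h i.+1.
have h'j : in_unit_ball j h' by move=> i ij; exact: hj.
have [->|vn0] := eqVneq v 0; first exact: multilinear_consv0.
have v_gt0 : 0 < `|v| by rewrite normr_gt0.
apply/normr0_eq0/eqP; rewrite eq_le normr_ge0 andbT.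
apply/ler_addgt0Pr => e e0; rewrite add0r.
have [d d0 Ad] := Ao (e / `|v|) (divr_gt0 e0 v_gt0); pose s := d / (2 * `|v|).
have s_gt0 : 0 < s by rewrite divr_gt0 // mulr_gt0.
have sv_lt : `|s *: v| < d.
  have -> : `|s *: v| = d / 2 by rewrite normrZ gtr0_norm // /s; field; exact: lt0r_neq0.
  by rewrite ltr_pdivrMr // ltr_pMr // ltr1n.
have := Ad _ _ sv_lt h'j; rewrite multilinear_consvZ !(normrZ s) (gtr0_norm s_gt0).
rewrite mulrCA ler_pM2l // => /le_trans; apply.
by rewrite divfK ?gt_eqF.
Qed.

End ConsMultilinear.

End Multilinear.

Section HigherDerivatives.
Variables (R : realType) (X Y : normedModType R) (U : set X) (k : extnat).
Implicit Types (g : X -> Y) (D : nat -> X -> (nat -> X) -> Y).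

Lemma is_higher_derivsB g1 g2 D1 D2 :
  is_higher_derivs U k g1 D1 -> is_higher_derivs U k g2 D2 ->
  is_higher_derivs U k (fun x => g1 x - g2 x) (fun j x h => D1 j x h - D2 j x h).
Proof.
move=> [D10 D1ml D1d D1c] [D20 D2ml D2d D2c]; split.
- by move=> x h Ux; rewrite D10 // D20.
- by move=> j x jk Ux; apply: multilinearB; [exact: D1ml|exact: D2ml].
- move=> j x jk Ux e e0; have e2 : 0 < e / 2 by rewrite divr_gt0.
  have [d1 d10 D1x] := D1d j x jk Ux _ e2; have [d2 d20 D2x] := D2d j x jk Ux _ e2.
  exists (Num.min d1 d2) => [|y Uy]; first by rewrite lt_min d10.
  rewrite lt_min => /andP[yd1 yd2].
  rewrite (_ : (fun h => _) = fun h =>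
    (D1 j y h - D1 j x h - D1 j.+1 x (consv (y - x) h)) -
    (D2 j y h - D2 j x h - D2 j.+1 x (consv (y - x) h))); last first.
    by apply/funext => h /=; rewrite (subrACA (D1 j y h)) (subrACA (D1 j y h - D1 j x h)).
  apply: le_trans (opnormB_le _ _ _) _.
  by rewrite [e in (e * _)%:E](splitr e) mulrDl EFinD leeD ?D1x ?D2x.
- move=> j x jk Ux e e0; have e2 : 0 < e / 2 by rewrite divr_gt0.
  have [d1 d10 D1x] := D1c j x jk Ux _ e2; have [d2 d20 D2x] := D2c j x jk Ux _ e2.
  exists (Num.min d1 d2) => [|y Uy]; first by rewrite lt_min d10.
  rewrite lt_min => /andP[yd1 yd2].
  rewrite (_ : (fun h => _) = fun h =>
    (D1 j y h - D1 j x h) - (D2 j y h - D2 j x h)); last first.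
    by apply/funext => h /=; rewrite subrACA.
  apply: le_trans (opnormB_le _ _ _) _.
  by rewrite [e in e%:E](splitr e) EFinD leeD ?D1x ?D2x.
Qed.

Lemma is_higher_derivs_uniq g D1 D2 : open U ->
  is_higher_derivs U k g D1 -> is_higher_derivs U k g D2 ->
  forall j, le_extnat j k -> forall x, U x -> D1 j x =1 D2 j x.
Proof.
move=> Uo [D10 D1ml D1d _] [D20 D2ml D2d _].
elim=> [_ x Ux h|j IHj jk x Ux h]; first by rewrite D10 // D20.
apply/eqP; rewrite -subr_eq0; apply/eqP; move: h.
apply: (multilinear_consv_littleo_eq0 (multilinearB (D1ml _ _ jk Ux) (D2ml _ _ jk Ux))).
move=> e e0; have e2 : 0 < e / 2 by rewrite divr_gt0.
have [r r0 rU] : exists2 r, 0 < r & ball x r `<=` U.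
  by apply/nbhs_ballP; move: Uo; rewrite openE; exact.
have [d1 d10 D1x] := D1d j x jk Ux _ e2; have [d2 d20 D2x] := D2d j x jk Ux _ e2.
exists (Num.min r (Num.min d1 d2)); first by rewrite !lt_min r0 d10.
move=> v h; rewrite !lt_min => /and3P[vr vd1 vd2] hj.
have Uxv : U (x + v) by apply: rU; rewrite -ball_normE /= opprD addNKr normrN.
have xvx : x + v - x = v by rewrite addrAC subrr add0r.
have xvd1 : `|x + v - x| < d1 by rewrite xvx.
have xvd2 : `|x + v - x| < d2 by rewrite xvx.
have jk' := le_extnatS jk.
have -> : D1 j.+1 x (consv v h) - D2 j.+1 x (consv v h) =
    (D2 j (x + v) h - D2 j x h - D2 j.+1 x (consv v h)) -
    (D1 j (x + v) h - D1 j x h - D1 j.+1 x (consv v h)).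
  by rewrite !IHj // subrACA subrr sub0r opprB.
have D1v : `|D1 j (x + v) h - D1 j x h - D1 j.+1 x (consv v h)| <= e / 2 * `|v|.
  have := le_trans (opnorm_ubound _ hj) (D1x _ Uxv xvd1).
  by rewrite /= xvx lee_fin.
have D2v : `|D2 j (x + v) h - D2 j x h - D2 j.+1 x (consv v h)| <= e / 2 * `|v|.
  have := le_trans (opnorm_ubound _ hj) (D2x _ Uxv xvd2).
  by rewrite /= xvx lee_fin.
by rewrite [e](splitr e) mulrDl; apply: le_trans (ler_normB _ _) _; exact: lerD.
Qed.

End HigherDerivatives.

(* Continuous induction: the supremum [c] of the initial segments of [0, 1] on which
   the bound holds belongs to them and equals 1. *)
Section MeanValueInequality.
Variables (R : realType) (Y : normedModType R) (phi : R -> Y) (L : R).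
Hypothesis phi_lip : forall t, 0 <= t <= 1 -> exists2 d, 0 < d &
  forall s, 0 <= s <= 1 -> `|s - t| < d -> `|phi s - phi t| <= L * `|s - t|.

Let S := [set t : R | 0 <= t <= 1 /\
  forall s, 0 <= s <= t -> `|phi s - phi 0| <= L * s].
Let c := sup S.

Let S0 : S 0.
Proof.
split=> [|s /andP[s0 s0']]; first by rewrite lexx ler01.
by rewrite (@le_anti _ _ s 0) ?s0 ?s0' // subrr normr0 mulr0.
Qed.

Let S_has_sup : has_sup S.
Proof. by split; [exists 0 | exists 1 => t [/andP[_ ->]]]. Qed.

Let c_ge0 : 0 <= c.
Proof. exact: sup_upper_bound. Qed.

Let c_le1 : c <= 1.
Proof. by apply: ge_sup; [exists 0 | move=> t [/andP[_ ->]]]. Qed.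

Let c01 : 0 <= c <= 1.
Proof. by rewrite c_ge0 c_le1. Qed.

Let lip_upto_sup s : 0 <= s <= c -> `|phi s - phi 0| <= L * s.
Proof.
move=> /andP[s0]; rewrite le_eqVlt => /orP[/eqP->|sc]; last first.
  have cs0 : 0 < c - s by rewrite subr_gt0.
  have [t [_ St] ts] := sup_adherent cs0 S_has_sup.
  by apply: St; rewrite s0 ltW //; move: ts; rewrite opprB addrCA subrr addr0.
have [->|cn0] := eqVneq c 0; first by rewrite subrr normr0 mulr0.
have c_gt0 : 0 < c by rewrite lt_neqAle eq_sym cn0.
have [d d0 lipc] := phi_lip c01.
have m0 : 0 < Num.min c (d / 2) by rewrite lt_min c_gt0 divr_gt0.
have [t [t01 St] ct] := sup_adherent m0 S_has_sup.
have tc : t <= c by apply: sup_upper_bound => //; split.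
have ctd : `|t - c| < d.
  rewrite distrC ger0_norm ?subr_ge0 // ltrBlDr addrC -ltrBlDr.
  apply: le_lt_trans ct; rewrite lerD2l lerN2 ge_min; apply/orP; right.
  by rewrite ler_pdivrMr // ler_pMr // ler1n.
have := lipc t t01 ctd.
rewrite distrC (distrC t) ger0_norm ?subr_ge0 // => lipct.
apply: le_trans (ler_distD (phi t) _ _) _.
rewrite (_ : L * c = L * (c - t) + L * t); last by ring.
by rewrite lerD // St // lexx; case/andP: t01 => ->.
Qed.

Let sup_eq1 : c = 1.
Proof.
apply/eqP; rewrite eq_le c_le1 leNgt; apply/negP => c_lt1.
have [d d0 lipc] := phi_lip c01.
pose t := Num.min 1 (c + d / 2).
have ct : c < t by rewrite lt_min c_lt1 ltrDl divr_gt0.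
suff St : S t by have := sup_upper_bound S_has_sup St; rewrite leNgt ct.
split=> [|s /andP[s0 st]]; first by rewrite (le_trans c_ge0 (ltW ct)) ge_min lexx.
have [sc|cs] := leP s c; first by apply: lip_upto_sup; rewrite s0.
have s01 : 0 <= s <= 1 by rewrite s0 (le_trans st) // ge_min lexx.
have csd : `|s - c| < d.
  rewrite ger0_norm ?subr_ge0 ?(ltW cs) // ltrBlDl.
  apply: le_lt_trans st _; rewrite gt_min; apply/orP; right.
  by rewrite ltrD2l ltr_pdivrMr // ltr_pMr // ltr1n.
have := lipc s s01 csd.
rewrite ger0_norm ?subr_ge0 ?(ltW cs) // => lipcs.
apply: le_trans (ler_distD (phi c) _ _) _.
rewrite (_ : L * s = L * (s - c) + L * c); last by ring.
by rewrite lerD // lip_upto_sup // c_ge0 lexx.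
Qed.

Lemma local_lipschitz_segment_bound : `|phi 1 - phi 0| <= L.
Proof. by have := @lip_upto_sup 1; rewrite sup_eq1 ler01 lexx mulr1; apply. Qed.

End MeanValueInequality.

Lemma mean_value_ineq (R : realType) (Y : normedModType R) (phi : R -> Y) (M : R) :
  (forall t, 0 <= t <= 1 -> forall e, 0 < e -> exists2 d, 0 < d &
     forall s, 0 <= s <= 1 -> `|s - t| < d -> `|phi s - phi t| <= (M + e) * `|s - t|) ->
  `|phi 1 - phi 0| <= M.
Proof.
move=> phi_lip; apply/ler_addgt0Pr => e e0.
by apply: local_lipschitz_segment_bound => t t01; exact: phi_lip.
Qed.

Section CompactSets.
Variables (R : realType) (X : normedModType R).

Lemma compact_setU1_range (x : X) (y : nat -> X) :
  (forall n, `|x - y n| < n.+1%:R^-1) -> compact (x |` range y).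
Proof.
move=> yx F PF FK.
have [|xnF] := pselect (cluster F x); first by exists x; split => //; left.
have [A [B [FA xB AB0]]] : exists A B, [/\ F A, nbhs x B & A `&` B = set0].
  apply: contra_notP xnF => xB C D FC xD; apply/set0P/negP => /eqP CD0.
  by apply: xB; exists C, D.
have [r r0 rB] : exists2 r, 0 < r & ball x r `<=` B by move/nbhs_ballP : xB.
have [N _ Nr] := near_infty_natSinv_lt (PosNum r0).
have FyN : F (y @` [set n | (n < N)%N]).
  apply: filterS (filterI FK FA) => z [[->|[n _ <-]] Az].
    have : (A `&` B) x by split => //; apply: rB; exact: ballxx.
    by rewrite AB0.
  exists n => //=; rewrite ltnNge; apply/negP => Nn.
  have : (A `&` B) (y n).
    by split => //; apply: rB; rewrite -ball_normE /=; apply: lt_trans (yx n) (Nr _ _).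
  by rewrite AB0.
have [_ [[n _ <-] yn]] := finite_compact (finite_image _ (finite_II N)) PF FyN.
by exists (y n); split => //; right; exists n.
Qed.

Lemma normr_segment_le (x v : X) (t : R) : 0 <= t <= 1 -> `|x + t *: v - x| <= `|v|.
Proof.
by move=> /andP[t0 t1]; rewrite addrAC subrr add0r normrZ ger0_norm // ler_piMl.
Qed.

Lemma segment_sub_ball (x v : X) (r : R) :
  `|v| < r -> (fun t : R => x + t *: v) @` `[0, 1] `<=` ball x r.
Proof.
move=> vr _ [t t01 <-]; rewrite -ball_normE /= distrC.
by apply: le_lt_trans vr; apply: normr_segment_le; rewrite /= in_itv in t01.
Qed.

Lemma compact_segment (x v : X) : compact ((fun t : R => x + t *: v) @` `[0, 1]).
Proof.
apply: continuous_compact; last exact: segment_compact.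
by apply: continuous_subspaceT => t; apply: cvgD; [exact: cvg_cst|exact: scalel_continuous].
Qed.

End CompactSets.

Section FilterLimits.
Variables (R : realType) (Y : normedModType R) (T : Type) (G : set_system T).
Context {PG : ProperFilter G}.

Lemma cvg_dist_le_near (E : T -> Y) (l z : Y) (e : R) : E @ G --> l ->
  (\forall t \near G, `|z - E t| <= e) -> `|z - l| <= e.
Proof.
move=> /cvgrPdist_lt El ze; apply/ler_addgt0Pr => eta eta0.
have [t [Elt zet]] := filter_ex (filterI (El _ eta0) ze).
apply: le_trans (ler_distD (E t) _ _) _.
by rewrite lerD // distrC ltW.
Qed.

Lemma cvg_eq_near (E1 E2 : T -> Y) (l1 l2 : Y) : E1 @ G --> l1 -> E2 @ G --> l2 ->
  (\forall t \near G, E1 t = E2 t) -> l1 = l2.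
Proof.
move=> E1l E2l E12; apply: (cvg_unique _ _ E2l) => //.
by apply: cvg_trans E1l; exact: near_eq_cvg.
Qed.

Lemma cvg_mule_dist_le_near (a : \bar R) (E : T -> Y) (l z : Y) (c : R) :
  (0 <= a)%E -> E @ G --> l ->
  (\forall t \near G, (a * `|z - E t|%:E <= c%:E)%E) -> (a * `|z - l|%:E <= c%:E)%E.
Proof.
move=> a0 El; case: a a0 => [a a0 zEc|_ zEc|//].
- rewrite lee_fin in a0; rewrite -EFinM lee_fin; have [->|an0] := eqVneq a 0.
    have [t] := filter_ex zEc; rewrite mul0r -EFinM lee_fin.
    by apply: le_trans; exact: mulr_ge0.
  have a_gt0 : 0 < a by rewrite lt_neqAle eq_sym an0.
  rewrite -ler_pdivlMl //; apply: (cvg_dist_le_near El).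
  by apply: filterS zEc => t; rewrite -EFinM lee_fin ler_pdivlMl.
- have zl0 : `|z - l| = 0.
    apply/eqP; rewrite eq_le normr_ge0 andbT; apply: (cvg_dist_le_near El).
    apply: filterS zEc => t zEtc; rewrite leNgt; apply/negP => zEt.
    by move: zEtc; rewrite gt0_mulye ?lte_fin // leye_eq.
  have [t zEtc] := filter_ex zEc; rewrite zl0 mule0.
  by apply: le_trans zEtc; exact: mule_ge0.
Qed.

End FilterLimits.

Section Ck.
Variables (R : realType) (X Y : normedModType R) (U : set X) (k : extnat).
Hypothesis Uo : open U.
Implicit Types (g : X -> Y) (D : nat -> X -> (nat -> X) -> Y).

Lemma hder_mean_value g D j x v h (c : Y) (M : R) :
  is_higher_derivs U k g D -> le_extnat j.+1 k -> in_unit_ball j h ->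
  (forall t, 0 <= t <= 1 -> U (x + t *: v)) ->
  (forall t, 0 <= t <= 1 -> `|D j.+1 (x + t *: v) (consv v h) - c| <= M) ->
  `|D j (x + v) h - D j x h - c| <= M.
Proof.
move=> [_ Dml Dd _] jk hj segU DM; pose z t := x + t *: v.
(* [t |-> D j (z t) h - t *: c] has derivative [D j.+1 (z t) (consv v h) - c]. *)
have -> : D j (x + v) h - D j x h - c =
    (D j (z 1) h - 1 *: c) - (D j (z 0) h - 0 *: c).
  by rewrite /z !scale1r !scale0r addr0 subr0 addrAC.
apply: (@mean_value_ineq _ _ (fun t => D j (z t) h - t *: c)) => t t01 e e0.
have w1 : 0 < `|v| + 1 by rewrite ltr_wpDl.
have [d d0 Dzt] := Dd j (z t) jk (segU t t01) _ (divr_gt0 e0 w1).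
exists (d / (`|v| + 1)) => [|s s01 std]; first by rewrite divr_gt0.
have zst : z s - z t = (s - t) *: v by rewrite /z opprD addrACA subrr add0r scalerBl.
have zsd : `|z s - z t| < d.
  rewrite zst normrZ; apply: le_lt_trans (_ : _ <= `|s - t| * (`|v| + 1)) _.
    by rewrite ler_wpM2l // lerDl.
  by rewrite -ltr_pdivlMr.
have := le_trans (opnorm_ubound _ hj) (Dzt (z s) (segU s s01) zsd).
rewrite /= zst lee_fin (multilinear_consvZ (Dml _ _ jk (segU t t01))) => Drem.
have -> : D j (z s) h - s *: c - (D j (z t) h - t *: c) =
    (D j (z s) h - D j (z t) h - (s - t) *: D j.+1 (z t) (consv v h)) +
    (s - t) *: (D j.+1 (z t) (consv v h) - c).
  by rewrite scalerBr addrA subrK subrACA scalerBl.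
apply: le_trans (ler_normD _ _) _; rewrite normrZ mulrDl addrC mulrC.
apply: lerD; first exact: ler_wpM2r (DM t t01).
apply: le_trans Drem _; rewrite normrZ mulrCA mulrC ler_wpM2r //.
by rewrite mulrAC ler_pdivrMr // ler_pM2l // lerDl.
Qed.

Lemma is_higher_derivs_hder g : isCk U k g -> is_higher_derivs U k g (hder U k g).
Proof. by move=> [D gD]; apply: epsilon_spec; exists D. Qed.

Lemma hder_multilinear g j x : isCk U k g -> le_extnat j k -> U x ->
  bounded_multilinear j (hder U k g j x).
Proof. by move=> /is_higher_derivs_hder[_ + _ _]; apply. Qed.

Lemma isCkB g1 g2 : isCk U k g1 -> isCk U k g2 -> isCk U k (fun x => g1 x - g2 x).
Proof. by move=> [D1 gD1] [D2 gD2]; eexists; exact: is_higher_derivsB gD1 gD2. Qed.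

Lemma hderB g1 g2 D2 : isCk U k g1 -> is_higher_derivs U k g2 D2 ->
  forall j x, le_extnat j k -> U x ->
  hder U k (fun x => g1 x - g2 x) j x =1 (fun h => hder U k g1 j x h - D2 j x h).
Proof.
move=> g1C gD2 j x jk Ux; have g2C : isCk U k g2 by exists D2.
exact: (is_higher_derivs_uniq Uo (is_higher_derivs_hder (isCkB g1C g2C))
  (is_higher_derivsB (is_higher_derivs_hder g1C) gD2) jk Ux).
Qed.

Lemma wseminormB_ge f j g1 g2 x h : isCk U k g1 -> isCk U k g2 ->
  le_extnat j k -> U x -> in_unit_ball j h ->
  (`|f x| * `|hder U k g1 j x h - hder U k g2 j x h|%:E <=
     wseminorm U k f j (fun x => (g1 x - g2 x)%R))%E.
Proof.
move=> g1C g2C jk Ux hj.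
rewrite -(hderB g1C (is_higher_derivs_hder g2C) jk Ux h).
apply: le_trans (ereal_sup_ubound _); last by exists x.
by apply: lee_wpmul2l => //; exact: opnorm_ubound.
Qed.

End Ck.

Section Completeness.
Variables (R : realType) (X : normedModType R) (Y : completeNormedModType R).
Variables (U : set X) (k : extnat) (W : set (X -> \bar R)).
Hypothesis Uo : open U.
Hypothesis W_compact : forall K : set X, compact K -> K `<=` U ->
  exists2 fK, W fK & (0 < ereal_inf [set `|fK x|%E | x in K])%E.
Variable F : set_system (X -> Y).
Context {PF : ProperFilter F}.
Hypothesis F_CkW : F (CkW U k W).
Hypothesis F_cauchy : forall f j (e : R), W f -> le_extnat j k -> 0 < e ->
  exists2 A, F A & forall g g', A g -> A g' ->
    (wseminorm U k f j (fun x => (g x - g' x)%R) < e%:E)%E.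

Local Notation D g := (hder U k g).

Lemma weight_lbound_compact K : compact K -> K `<=` U -> exists2 fK, W fK &
  exists2 c : R, 0 < c & forall x, K x -> (c%:E <= `|fK x|)%E.
Proof.
move=> cK KU; have [fK WfK inf_gt0] := W_compact cK KU; exists fK => //.
have fKlb x : K x -> (ereal_inf [set `|fK x|%E | x in K] <= `|fK x|)%E.
  by move=> Kx; apply: ereal_inf_lbound; exists x.
move: inf_gt0 fKlb; case: (ereal_inf _) => [r r0 fKlb|_ fKlb|//]; first by exists r.
by exists 1 => // x /fKlb; rewrite leye_eq => /eqP ->; rewrite leey.
Qed.

Lemma hder_cauchy_compact K j e : compact K -> K `<=` U -> le_extnat j k -> 0 < e ->
  exists2 A, F A & forall g1 g2, A g1 -> A g2 -> CkW U k W g1 /\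
    forall x, K x -> forall h, in_unit_ball j h -> `|D g1 j x h - D g2 j x h| < e.
Proof.
move=> cK KU jk e0; have [fK WfK [c c0 fKc]] := weight_lbound_compact cK KU.
have [A FA Acauchy] := F_cauchy WfK jk (mulr_gt0 c0 e0).
exists (A `&` CkW U k W); first exact: filterI.
move=> g1 g2 [Ag1 g1C] [Ag2 g2C]; split => // x Kx h hj.
have := le_lt_trans (wseminormB_ge Uo fK g1C.1 g2C.1 jk (KU _ Kx) hj) (Acauchy _ _ Ag1 Ag2).
rewrite -(ltr_pM2l c0) -lte_fin; apply: le_lt_trans.
by rewrite EFinM; apply: lee_wpmul2r; [rewrite lee_fin|exact: fKc].
Qed.

Lemma hder_cvg j x h : le_extnat j k -> U x -> cvg ((fun g => D g j x h) @ F).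
Proof.
move=> jk Ux; apply: cauchy_cvg; apply: cauchy_exP => e e0.
pose P := \prod_(i < j) `|h i|; have P0 : 0 <= P by exact: prodr_ge0.
have P1 : 0 < P + 1 by rewrite ltr_wpDl.
have xU : [set x] `<=` U by move=> y ->.
have [A FA Acauchy] := hder_cauchy_compact (@compact_set1 X x) xU jk (divr_gt0 e0 P1).
have [g0 Ag0] := filter_ex FA; exists (D g0 j x h).
apply: (@filterS _ _ _ A [set g | ball (D g0 j x h) e (D g j x h)]) => // g Ag /=.
rewrite -ball_normE /=.
have [g0C g0g] := Acauchy _ _ Ag0 Ag; have [gC _] := Acauchy _ _ Ag Ag0.
have D0g := multilinearB (hder_multilinear g0C.1 jk Ux) (hder_multilinear gC.1 jk Ux).
apply: le_lt_trans (normr_multilinear_le D0g h) _.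
apply: (@le_lt_trans _ _ (e / (P + 1) * P)).
  apply: ler_wpM2r => //; rewrite -lee_fin fineK; last by case: D0g => _ _ /opnorm_fin_num.
  by apply: opnorm_le => h' h'j; rewrite lee_fin ltW // g0g.
by rewrite mulrAC -mulrA gtr_pMr // ltr_pdivrMr // mul1r ltrDl.
Qed.

Definition hder_lim j x h := lim ((fun g => D g j x h) @ F).

Lemma hder_lim_cvg j x h : le_extnat j k -> U x ->
  (fun g => D g j x h) @ F --> hder_lim j x h.
Proof. exact: hder_cvg. Qed.

Lemma near_hder_lim_compact K j e : compact K -> K `<=` U -> le_extnat j k -> 0 < e ->
  F [set g | CkW U k W g /\ forall x, K x -> forall h, in_unit_ball j h ->
     `|D g j x h - hder_lim j x h| <= e].
Proof.
move=> cK KU jk e0; have [A FA Acauchy] := hder_cauchy_compact cK KU jk e0.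
apply: (filterS _ FA) => g Ag; have [gC _] := Acauchy g g Ag Ag.
split => // x Kx h hj.
have near_g : \forall g' \near F, `|D g j x h - D g' j x h| <= e.
  by apply: (filterS _ FA) => g' Ag'; exact/ltW/(Acauchy g g' Ag Ag').2.
exact: cvg_dist_le_near (hder_lim_cvg jk (KU _ Kx)) near_g.
Qed.

Lemma near_hder_lim_weighted f j e : W f -> le_extnat j k -> 0 < e ->
  F [set g | CkW U k W g /\ forall x, U x -> forall h, in_unit_ball j h ->
     (`|f x| * `|D g j x h - hder_lim j x h|%:E <= e%:E)%E].
Proof.
move=> Wf jk e0; have [A FA Acauchy] := F_cauchy Wf jk e0.
have FACkW : F (A `&` CkW U k W) := filterI FA F_CkW.
apply: (@filterS _ _ _ (A `&` CkW U k W)); last exact: FACkW.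
move=> g [Ag gC]; split => // x Ux h hj.
apply: (cvg_mule_dist_le_near (abse_ge0 (f x)) (hder_lim_cvg jk Ux)).
apply: (@filterS _ _ _ (A `&` CkW U k W)); last exact: FACkW.
move=> g' [Ag' g'C].
exact/(le_trans (wseminormB_ge Uo f gC.1 g'C.1 jk Ux hj))/ltW/Acauchy.
Qed.

Lemma hder_lim_multilinear j x : le_extnat j k -> U x ->
  bounded_multilinear j (hder_lim j x).
Proof.
move=> jk Ux; split.
- move=> h h' hh'.
  apply: (cvg_eq_near (hder_lim_cvg (h := h) jk Ux) (hder_lim_cvg (h := h') jk Ux)).
  by apply: (filterS _ F_CkW) => g gC; case: (hder_multilinear gC.1 jk Ux) => + _ _; apply.
- move=> i ij h a u v; apply: (cvg_eq_near (hder_lim_cvg jk Ux)).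
    by apply: cvgD; [apply: cvgZ; [exact: cvg_cst|]|]; exact: hder_lim_cvg.
  by apply: (filterS _ F_CkW) => g gC; case: (hder_multilinear gC.1 jk Ux) => _ + _; apply.
- have xU : [set x] `<=` U by move=> y ->.
  have [g [gC glim]] := filter_ex (near_hder_lim_compact (@compact_set1 X x) xU jk ltr01).
  have [_ _ gfin] := hder_multilinear gC.1 jk Ux.
  apply: (@le_lt_trans _ _ (fine (opnorm j (D g j x)) + 1)%:E); last exact: ltry.
  apply: opnorm_le => h hj; rewrite lee_fin.
  rewrite -[hder_lim j x h](subKr (D g j x h)).
  apply: le_trans (ler_normB _ _) _.
  by apply: lerD; [exact: normr_le_opnorm|exact: glim].
Qed.

Lemma hder_lim_continuous j x : le_extnat j k -> U x -> forall e : R, 0 < e ->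
  exists2 d : R, 0 < d & forall y, U y -> `|y - x| < d ->
    (opnorm j (fun h => (hder_lim j y h - hder_lim j x h)%R) <= e%:E)%E.
Proof.
move=> jk Ux e e0; apply: contrapT => discont.
have far n : exists y, [/\ U y, `|x - y| < n.+1%:R^-1 &
    ~ (opnorm j (fun h => (hder_lim j y h - hder_lim j x h)%R) <= e%:E)%E].
  apply: contrapT => near_cont; apply: discont.
  exists n.+1%:R^-1 => [|y' Uy' y'x]; first by rewrite invr_gt0.
  by apply: contrapT => y'far; apply: near_cont; exists y'; rewrite distrC.
have [y yP] := boolp.choice far.
have cK : compact (x |` range y) by apply: compact_setU1_range => n; case: (yP n).
have KU : x |` range y `<=` U by move=> _ [->|[n _ <-]] //; case: (yP n).
have e3 : 0 < e / 3 by rewrite divr_gt0.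
have [g [gC glim]] := filter_ex (near_hder_lim_compact cK KU jk e3).
have [_ _ _ Dgc] := is_higher_derivs_hder gC.1.
have [d d0 Dgx] := Dgc j x jk Ux _ e3.
have [N _ Nd] := near_infty_natSinv_lt (PosNum d0).
have [UyN yNx yNfar] := yP N; apply: yNfar.
have yNd : `|y N - x| < d by rewrite distrC; exact: lt_trans yNx (Nd N (leqnn N)).
apply: opnorm_le => h hj; rewrite lee_fin (subr_telescope (D g j (y N) h) (D g j x h)).
have := le_trans (opnorm_ubound _ hj) (Dgx _ UyN yNd); rewrite lee_fin => Dgyx.
rewrite [e](_ : e = e / 3 + e / 3 + e / 3); last by field.
apply: le_trans (ler_normD _ _) _; rewrite lerD ?glim //; last by left.
apply: le_trans (ler_normB _ _) _; rewrite lerD ?glim //; by right; exists N.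
Qed.

Lemma hder_approx_mean_value g j x v h (e1 e : R) :
  isCk U k g -> le_extnat j.+1 k -> in_unit_ball j h ->
  (forall t, 0 <= t <= 1 -> U (x + t *: v)) ->
  (forall t, 0 <= t <= 1 -> forall h', in_unit_ball j.+1 h' ->
     `|D g j.+1 (x + t *: v) h' - hder_lim j.+1 (x + t *: v) h'| <= e1) ->
  (forall t, 0 <= t <= 1 -> forall h', in_unit_ball j.+1 h' ->
     `|hder_lim j.+1 (x + t *: v) h' - hder_lim j.+1 x h'| <= e) ->
  `|D g j (x + v) h - D g j x h - hder_lim j.+1 x (consv v h)| <= (e1 + e) * `|v|.
Proof.
move=> gC jk1 hj segU gz limz.
have Ux : U x by rewrite -[x]addr0 -(scale0r v); apply: segU; rewrite lexx ler01.
apply: (hder_mean_value (is_higher_derivs_hder gC) jk1 hj segU) => t t01.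
have Uz := segU t t01.
rewrite -(subrK (hder_lim j.+1 (x + t *: v) (consv v h)) (D g _ _ _)) -addrA mulrDl.
apply: le_trans (ler_normD _ _) _; apply: lerD.
- apply: (normr_multilinear_consv_le
    (multilinearB (hder_multilinear gC jk1 Uz) (hder_lim_multilinear jk1 Uz))) => //.
  exact: gz.
- apply: (normr_multilinear_consv_le
    (multilinearB (hder_lim_multilinear jk1 Uz) (hder_lim_multilinear jk1 Ux))) => //.
  exact: limz.
Qed.

Lemma hder_lim_frechet j x : le_extnat j.+1 k -> U x -> forall e : R, 0 < e ->
  exists2 d : R, 0 < d & forall y, U y -> `|y - x| < d ->
    (opnorm j (fun h =>
       (hder_lim j y h - hder_lim j x h - hder_lim j.+1 x (consv (y - x) h))%R)
     <= (e * `|y - x|)%:E)%E.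
Proof.
move=> jk1 Ux e e0; have jk := le_extnatS jk1.
have [d1 d10 Dlc] := hder_lim_continuous jk1 Ux e0.
have [r r0 rU] : exists2 r, 0 < r & ball x r `<=` U.
  by apply/nbhs_ballP; move: Uo; rewrite openE; exact.
exists (Num.min r d1) => [|y Uy]; first by rewrite lt_min r0 d10.
rewrite lt_min => /andP[yr yd1]; apply: opnorm_le => h hj; rewrite lee_fin.
set v := y - x; have xvy : x + v = y by rewrite addrC subrK.
pose K := (fun t => x + t *: v) @` `[0, 1].
have KU : K `<=` U := subset_trans (segment_sub_ball (x := x) yr) rU.
have Kz t : 0 <= t <= 1 -> K (x + t *: v) by move=> t01; exists t; rewrite //= in_itv.
have zU t (t01 : 0 <= t <= 1) : U (x + t *: v) := KU _ (Kz t t01).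
have Ky : K y by rewrite -xvy -[v in x + v]scale1r; apply: Kz; rewrite ler01 lexx.
have Kx : K x by rewrite -[x in K x]addr0 -(scale0r v); apply: Kz; rewrite lexx ler01.
apply/ler_addgt0Pr => eta eta0.
pose e1 := eta / (3 * (1 + `|v|)).
have e10 : 0 < e1 by rewrite divr_gt0 // mulr_gt0 // ltr_pwDl.
have [g [[gC gj] [_ gj1]]] := filter_ex (filterI
  (near_hder_lim_compact (@compact_segment _ _ x v) KU jk e10)
  (near_hder_lim_compact (@compact_segment _ _ x v) KU jk1 e10)).
set c := hder_lim j.+1 x (consv v h).
have Dgyx : `|D g j y h - D g j x h - c| <= (e1 + e) * `|v|.
  rewrite -xvy; apply: (hder_approx_mean_value gC.1 jk1 hj zU).
    by move=> t t01; apply: gj1; exact: Kz.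
  move=> t t01 h' h'j.
  have zd1 : `|x + t *: v - x| < d1.
    exact: le_lt_trans (@normr_segment_le _ _ x v t t01) yd1.
  by have := le_trans (opnorm_ubound _ h'j) (Dlc _ (zU t t01) zd1); rewrite lee_fin.
have -> : hder_lim j y h - hder_lim j x h - c = (D g j y h - D g j x h - c) +
    (D g j x h - hder_lim j x h) - (D g j y h - hder_lim j y h).
  rewrite addrAC (subr_telescope (D g j y h - c) (D g j x h)) addrAC.
  by rewrite (subrACA (D g j y h)) subrr subr0 [D g j y h - c - _]addrAC.
apply: le_trans (ler_normB _ _) _; apply: le_trans (lerD (ler_normD _ _) (lexx _)) _.
apply: le_trans (lerD (lerD Dgyx (gj _ Kx h hj)) (gj _ Ky h hj)) _.
have -> : eta = e1 * (3 * (1 + `|v|)) by rewrite /e1 divfK // gt_eqF // mulr_gt0 // ltr_pwDl.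
by have := normr_ge0 v; nra.
Qed.

Definition lim_fun x := hder_lim 0 x (fun _ => 0).

Lemma is_higher_derivs_lim : is_higher_derivs U k lim_fun hder_lim.
Proof.
have k0 : le_extnat 0 k by case: k.
split.
- move=> x h Ux; apply: (cvg_eq_near (hder_lim_cvg k0 Ux) (hder_lim_cvg k0 Ux)).
  apply: (filterS _ F_CkW) => g gC.
  by have [Dg0 _ _ _] := is_higher_derivs_hder gC.1; rewrite !Dg0.
- exact: hder_lim_multilinear.
- exact: hder_lim_frechet.
- exact: hder_lim_continuous.
Qed.

Lemma CkW_lim_fun : CkW U k W lim_fun.
Proof.
have limC : isCk U k lim_fun by exists hder_lim; exact: is_higher_derivs_lim.
split => // f j Wf jk.
have [g [gC glim]] := filter_ex (near_hder_lim_weighted Wf jk ltr01).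
apply: (@le_lt_trans _ _ (wseminorm U k f j g + 1%:E)%E); last first.
  by apply: lte_add_pinfty; [exact: gC.2|exact: ltry].
apply/ereal_supP => _ [x Ux <-].
have -> : D lim_fun j x = hder_lim j x.
  apply/funext => h.
  by rewrite (is_higher_derivs_uniq Uo (is_higher_derivs_hder limC)
    is_higher_derivs_lim jk Ux).
apply: mule_opnorm_le => // h hj.
have Dlh : (`|hder_lim j x h|%:E <= `|D g j x h|%:E + `|D g j x h - hder_lim j x h|%:E)%E.
  by rewrite -EFinD lee_fin -{1}[hder_lim j x h](subKr (D g j x h)) ler_normB.
apply: le_trans (lee_wpmul2l (abse_ge0 _) Dlh) _.
rewrite ge0_muleDr ?lee_fin // leeD ?glim //.
apply: le_trans (ereal_sup_ubound _); last by exists x.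
by apply: lee_wpmul2l => //; exact: opnorm_ubound.
Qed.

Lemma CkW_lim_fun_cvg f j (e : R) : W f -> le_extnat j k -> 0 < e ->
  F [set g | (wseminorm U k f j (fun x => (g x - lim_fun x)%R) < e%:E)%E].
Proof.
move=> Wf jk e0; have e2 : 0 < e / 2 by rewrite divr_gt0.
apply: (filterS _ (near_hder_lim_weighted Wf jk e2)) => g [gC glim].
apply: (@le_lt_trans _ _ (e / 2)%:E); last by rewrite lte_fin ltr_pdivrMr // ltr_pMr // ltr1n.
apply/ereal_supP => _ [x Ux <-].
have -> : D (fun x => g x - lim_fun x) j x = fun h => D g j x h - hder_lim j x h.
  by apply/funext => h; rewrite (hderB Uo gC.1 is_higher_derivs_lim jk Ux).
exact: mule_opnorm_le (glim x Ux).
Qed.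

End Completeness.

Unset Implicit Arguments.

Theorem mainTheorem13 (R : realType) (X : normedModType R)
    (Y : completeNormedModType R) (U : set X) (k : extnat)
    (W : set (X -> \bar R)) :
  open U -> U !=set0 ->
  (forall K : set X, compact K -> K `<=` U ->
     exists2 fK, W fK & (0 < ereal_inf [set `|fK x|%E | x in K])%E) ->
  @CkW_complete R X Y U k W.
Proof.
move=> Uo _ W_compact F PF F_CkW F_cauchy.
exists (lim_fun U k F); first exact: (CkW_lim_fun Uo W_compact (PF := PF) F_CkW F_cauchy).
by move=> f j e; exact: (CkW_lim_fun_cvg Uo W_compact (PF := PF) F_CkW F_cauchy).
Qed.
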